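(* Let $\mathcal C$ be a concept hierarchy with maximum level $\ell_{max}$ and let $r_1,r_2\in[0,1]$ with $r_1\le r_2$. Let $\mathcal N$ be a network with maximum layer $\ell_{max}$ in which every concept $c\in C_\ell$ is assigned a neuron $rep(c)\in N_\ell$, with distinct concepts assigned distinct neurons (for $c\in C_0$, $rep(c)$ is the input neuron given by the bijection $rep$); let $R=rep(C)$ and $rep^{-1}:R\to C$ its inverse. Let the weight of the edge from $u\in N_\ell$ to $v\in N_{\ell+1}$ be $1$ if $u,v\in R$ and $rep^{-1}(u)\in children(rep^{-1}(v))$, and $0$ otherwise; let every non-input neuron have threshold $\tau=\frac{(r_1+r_2)k}{2}$, and let all engaged flags be $0$ at all times. Then $\mathcal N$ $(r_1,r_2)$-recognizes $\mathcal C$. Moreover, the required time is $\ell_{max}$, i.e., if $B$ is presented at time $t$, every decision required by recognition takes place at a time at most $t+\ell_{max}$.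
   Context: Data model. Fix positive integers $\ell_{max},n,k$. A universal set $D$ of concepts is partitioned into disjoint sets $D_0,\dots,D_{\ell_{max}}$ with $|D_0|=n$. A concept hierarchy consists of $C\subseteq D$ and a function $children$: with $C_\ell=C\cap D_\ell$, each $c\in C_\ell$ ($1\le\ell\le\ell_{max}$) has $children(c)\subseteq C_{\ell-1}$, $|children(c)|=k$; $|C_{\ell_{max}}|=k$; distinct concepts on the same level have disjoint children sets. For $B\subseteq D_0$ and $r\in[0,1]$: $B_0=B\cap C_0$, $B_\ell=\{c\in C_\ell: |children(c)\cap B_{\ell-1}|\ge rk\}$, $supported_r(B)=\bigcup_\ell B_\ell$. Network model. Layers $N_0,\dots,N_{\ell'_{max}}$ of $n$ neurons each, complete connections from each layer to the next and no other edges, a fixed bijection $rep:D_0\to N_0$. Discrete time; input neurons' firing is set externally. A non-input neuron $u$ has potential $pot^u(t)=\sum_v weight(v,u)\,y^v(t-1)$ over the neurons $v$ of the layer below, and fires at time $t$ (i.e. $y^u(t)=1$) iff $pot^u(t)\ge\tau$; weights change only when engaged flags are $1$. $B\subseteq D_0$ is presented at time $t$ if the input neurons firing at time $t$ are exactly $rep(B)$; $layer(u)$ is the index of the layer containing $u$. Recognition. $\mathcal N$ $(r_1,r_2)$-recognizes $c\in C$ if it contains a unique neuron $rep(c)$ such that whenever $B\subseteq C_0$ is presented at time $t$: if $c\in supported_{r_2}(B)$ then $rep(c)$ fires at time $t+layer(rep(c))$, and if $c\notin supported_{r_1}(B)$ then $rep(c)$ does not fire at time $t+layer(rep(c))$.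 $\mathcal N$ recognizes $\mathcal C$ if it recognizes every $c\in C$. *)

From mathcomp Require Import all_boot all_order all_algebra.
Set Implicit Arguments. Unset Strict Implicit. Unset Printing Implicit Defensive.
Import Order.TTheory GRing.Theory Num.Theory.

(* The universal set of concepts is a finite type D; its partition into
   D_0,...,D_lmax is given by the level map lev : D -> 'I_lmax.+1. *)

Definition level_set (D : finType) (lmax : nat) (lev : D -> 'I_lmax.+1)
  (A : {set D}) (l : nat) : {set D} :=
  [set c in A | val (lev c) == l].

Definition concept_hierarchy (D : finType) (lmax k : nat)
  (lev : D -> 'I_lmax.+1) (C : {set D}) (children : D -> {set D}) : Prop :=
  [/\ (forall c, c \in C -> 1 <= val (lev c) ->
         children c \subset level_set lev C (val (lev c)).-1
         /\ #|children c| = k),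
      #|level_set lev C lmax| = k &
      (forall c c', c \in C -> c' \in C -> lev c = lev c' -> c <> c' ->
         [disjoint children c & children c'])].

Fixpoint supp_level (R : realFieldType) (D : finType) (lmax k : nat)
  (lev : D -> 'I_lmax.+1) (C : {set D}) (children : D -> {set D})
  (r : R) (B : {set D}) (l : nat) : {set D} :=
  match l with
  | 0 => B :&: level_set lev C 0
  | l'.+1 =>
      [set c in level_set lev C l'.+1 |
        (r * k%:R <= (#|children c :&: @supp_level R D lmax k lev C children r B l'|)%:R)%R]
  end.

Definition supported (R : realFieldType) (D : finType) (lmax k : nat)
  (lev : D -> 'I_lmax.+1) (C : {set D}) (children : D -> {set D})
  (r : R) (B : {set D}) : {set D} :=
  \bigcup_(l < lmax.+1) supp_level k lev C children r B l.

Definition neuron (lmax n : nat) : finType := ('I_lmax.+1 * 'I_n)%type.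

Definition layer (lmax n : nat) (u : neuron lmax n) : nat := val u.1.

(* y : nat -> neuron -> bool is the firing pattern over (discrete) time.
   It is an execution of the network with (constant, since all engaged
   flags are 0) weights w and threshold tau if every non-input neuron u
   fires at time t+1 iff its potential, the weighted sum of the firing of
   the neurons of the layer below at time t, is >= tau.  Input neurons
   (layer 0) are set externally and hence unconstrained; the state of
   non-input neurons at time 0 is arbitrary. *)
Definition execution (R : realFieldType) (lmax n : nat)
  (w : neuron lmax n -> neuron lmax n -> R) (tau : R)
  (y : nat -> neuron lmax n -> bool) : Prop :=
  forall (t : nat) (u : neuron lmax n), 0 < layer u ->
    y t.+1 u =
    (tau <= \sum_(i < n)
              w (inord (layer u).-1, i) u * (y t (inord (layer u).-1, i))%:R)%R.

(* B is presented at time t: the input neurons firing at time t are exactly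
   rep(B), where repIn : D -> 'I_n gives the input neuron (0, repIn b). *)
Definition presented (D : finType) (lmax n : nat) (repIn : D -> 'I_n)
  (y : nat -> neuron lmax n -> bool) (t : nat) (B : {set D}) : Prop :=
  forall i : 'I_n, y t (ord0, i) = (i \in repIn @: B).

Definition recognizes_concept (R : realFieldType) (D : finType) (lmax n k : nat)
  (lev : D -> 'I_lmax.+1) (C : {set D}) (children : D -> {set D})
  (repIn : D -> 'I_n) (w : neuron lmax n -> neuron lmax n -> R) (tau : R)
  (r1 r2 : R) (c : D) (u : neuron lmax n) : Prop :=
  forall (y : nat -> neuron lmax n -> bool) (t : nat) (B : {set D}),
    execution w tau y ->
    B \subset level_set lev C 0 ->
    presented repIn y t B ->
    (c \in supported k lev C children r2 B -> y (t + layer u) u) /\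
    (c \notin supported k lev C children r1 B -> ~~ y (t + layer u) u).

Definition rep_neuron (D : finType) (lmax n : nat) (lev : D -> 'I_lmax.+1)
  (repN : D -> 'I_n) (c : D) : neuron lmax n := (lev c, repN c).

Definition hier_weight (R : realFieldType) (D : finType) (lmax n : nat)
  (lev : D -> 'I_lmax.+1) (C : {set D}) (children : D -> {set D})
  (repN : D -> 'I_n) (u v : neuron lmax n) : R :=
  (([exists c, exists c',
      [&& c \in C, c' \in C, rep_neuron lev repN c == u,
          rep_neuron lev repN c' == v & c \in children c']]) : nat)%:R.

From mathcomp Require Import all_boot all_order all_algebra.
Import Order.TTheory GRing.Theory Num.Theory.

Set Implicit Arguments. Unset Strict Implicit. Unset Printing Implicit Defensive.

(* The sets B_l are computed by the recursion "c is in level l+1 iff at least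
   r k of its children are in level l", and so are the sets of neurons firing
   at time t + l: with the weights of the construction, the potential of rep(c)
   is the number of firing children, compared with tau.  This recursion is
   monotone in the threshold, so since r1 k <= tau <= r2 k, induction on l
   sandwiches the firing set of layer l between B_l for r2 and B_l for r1. *)

Section SupportedLevels.

Variables (R : realFieldType) (D : finType) (lmax k : nat).
Variables (lev : D -> 'I_lmax.+1) (C : {set D}) (children : D -> {set D}).

Local Notation supp_level := (supp_level k lev C children).

Lemma supp_level_sub (r : R) B l : supp_level r B l \subset level_set lev C l.
Proof. by case: l => [|l]; apply/subsetP => x; rewrite !inE => /andP[]. Qed.

Lemma mem_supported (r : R) B x :
  (x \in supported k lev C children r B) = (x \in supp_level r B (lev x)).
Proof.
apply/bigcupP/idP => [[l _ xBl]|]; last by exists (lev x).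
have := subsetP (supp_level_sub r B l) x xBl.
by rewrite inE => /andP[_ /eqP ->].
Qed.

Lemma supp_level_sandwich (r1 r2 tau : R) B (F : nat -> {set D}) :
  (r1 * k%:R <= tau)%R -> (tau <= r2 * k%:R)%R ->
  F 0 = B :&: level_set lev C 0 ->
  (forall l, F l.+1 =
     [set c in level_set lev C l.+1 | tau <= (#|children c :&: F l|)%:R]%R) ->
  forall l, supp_level r2 B l \subset F l /\ F l \subset supp_level r1 B l.
Proof.
move=> r1_tau tau_r2 F0 FS; elim=> [|l [sub2 sub1]]; first by rewrite F0.
have card_le (A A' : {set D}) c :
  A \subset A' -> ((#|children c :&: A|)%:R <= (#|children c :&: A'|)%:R :> R)%R.
  by move=> sAA'; rewrite ler_nat subset_leq_card // setIS.
rewrite FS; split; apply/subsetP => c; rewrite !inE => /andP[-> cA] /=.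
- exact: le_trans tau_r2 (le_trans cA (card_le _ _ _ sub2)).
- exact: le_trans r1_tau (le_trans cA (card_le _ _ _ sub1)).
Qed.

End SupportedLevels.

Section HierarchyNetwork.

Variables (R : realFieldType) (D : finType) (lmax n k : nat).
Variables (lev : D -> 'I_lmax.+1) (C : {set D}) (children : D -> {set D}).
Variables (repIn repN : D -> 'I_n).

Hypothesis children_below : forall c, c \in C -> 0 < lev c ->
  children c \subset level_set lev C (lev c).-1.
Hypothesis rep_inj : {in C &, injective (rep_neuron lev repN)}.

Local Notation rep := (rep_neuron lev repN).
Local Notation weight := (hier_weight R lev C children repN).

Lemma lev_pred_lt c l : lev c = l.+1 :> nat -> l < lmax.+1.
Proof. by move=> lc; apply: ltn_trans (ltn_ord (lev c)); rewrite lc. Qed.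

Lemma lev_child c l d : c \in C -> lev c = l.+1 :> nat -> d \in children c ->
  d \in C /\ lev d = inord l.
Proof.
move=> cC lc /(subsetP (children_below cC _)); rewrite lc inE => /(_ isT).
case/andP=> dC /eqP ld; split=> //; apply: val_inj.
by rewrite /= ld inordK // (lev_pred_lt lc).
Qed.

Lemma hier_weight_child c l i : c \in C -> lev c = l.+1 :> nat ->
  weight (inord l, i) (rep c) = ((i \in repN @: children c)%:R)%R.
Proof.
move=> cC lc; congr (GRing.natmul _ (nat_of_bool _)).
apply/existsP/imsetP => [[d /existsP[c' /and5P[_ c'C /eqP[_ <-] /eqP rc' dc']]]|].
  have ec : c' = c by apply: rep_inj.
  by exists d; rewrite // -ec.
move=> [d dc ->]; have [dC ld] := lev_child cC lc dc.
by exists d; apply/existsP; exists c; rewrite dC cC dc /rep_neuron ld !eqxx.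
Qed.

Lemma hier_potential c l (x : neuron lmax n -> bool) :
  c \in C -> lev c = l.+1 :> nat ->
  (\sum_(i < n) weight (inord l, i) (rep c) * (x (inord l, i))%:R =
   (#|[set d in children c | x (rep d)]|)%:R)%R.
Proof.
move=> cC lc; have lev_ch := lev_child cC lc.
under eq_bigr => i _ do rewrite hier_weight_child // mulr_natl mulrb.
rewrite -big_mkcond big_imset /=; last first.
  move=> d d' dc d'c eq_rep; have [dC ld] := lev_ch d dc.
  have [d'C ld'] := lev_ch d' d'c.
  by apply: rep_inj; rewrite // /rep_neuron ld ld' eq_rep.
rewrite -sum1_card natr_sum big_mkcond [in RHS]big_mkcond /=.
apply: eq_bigr => d _; rewrite inE.
case: (boolP (d \in children c)) => //= dc.
by rewrite /rep_neuron (lev_ch d dc).2; case: (x _).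
Qed.

Definition fired (y : nat -> neuron lmax n -> bool) t l : {set D} :=
  [set c in level_set lev C l | y (t + l) (rep c)].

Lemma fired0 y t (B : {set D}) :
  {in [set d | val (lev d) == 0] &, injective repIn} ->
  (forall c, c \in C -> val (lev c) = 0 -> repN c = repIn c) ->
  B \subset level_set lev C 0 -> presented repIn y t B ->
  fired y t 0 = B :&: level_set lev C 0.
Proof.
move=> injIn repN_in BC0 pres; apply/setP => c.
rewrite !inE -andbA [(c \in B) && _]andbC -andbA.
apply: andb_id2l => cC; apply: andb_id2l => /eqP lc.
have -> : rep c = (ord0, repIn c).
  by rewrite /rep_neuron -repN_in //; congr pair; apply: val_inj.
rewrite addn0 pres.
apply/imsetP/idP => [[b bB eq_b]|]; last by exists c.
have := subsetP BC0 b bB; rewrite inE => /andP[_ /eqP lb].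
by rewrite (injIn c b) // inE ?lc ?lb.
Qed.

Lemma fired_succ tau y t l : execution weight tau y ->
  fired y t l.+1 =
  [set c in level_set lev C l.+1 | tau <= (#|children c :&: fired y t l|)%:R]%R.
Proof.
move=> exe; apply/setP => c; rewrite !inE; apply: andb_id2l => /andP[cC /eqP lc].
have -> : children c :&: fired y t l = [set d in children c | y (t + l) (rep d)].
  apply/setP => d; rewrite !inE; case: (boolP (d \in children c)) => //= dc.
  by have [-> ->] := lev_child cC lc dc; rewrite inordK ?eqxx // (lev_pred_lt lc).
by rewrite -(hier_potential (y (t + l)) cC lc) addnS exe /layer /= lc.
Qed.

End HierarchyNetwork.

Theorem mainTheorem2 (R : realFieldType) (D : finType) (lmax n k : nat)
  (lev : D -> 'I_lmax.+1) (C : {set D}) (children : D -> {set D})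
  (repIn : D -> 'I_n) (repN : D -> 'I_n) (r1 r2 : R) :
  0 < lmax -> 0 < n -> 0 < k ->
  (* |D_0| = n and rep : D_0 -> N_0 is a bijection *)
  #|[set d | val (lev d) == 0]| = n ->
  {in [set d | val (lev d) == 0] &, injective repIn} ->
  concept_hierarchy k lev C children ->
  (0 <= r1)%R -> (r1 <= r2)%R -> (r2 <= 1)%R ->
  (* the assignment of neurons to concepts extends the input bijection *)
  (forall c, c \in C -> val (lev c) = 0 -> repN c = repIn c) ->
  (* distinct concepts are assigned distinct neurons *)
  {in C &, injective (rep_neuron lev repN)} ->
  (forall c, c \in C ->
     recognizes_concept k lev C children repIn
       (hier_weight R lev C children repN) ((r1 + r2) * k%:R / 2%:R)%R
       r1 r2 c (rep_neuron lev repN c))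
  /\ (forall c, c \in C -> layer (rep_neuron lev repN c) <= lmax).
Proof.
move=> _ _ _ _ injIn [hier _ _] _ r12 _ repN_in rep_inj.
have children_below d : d \in C -> 0 < lev d ->
    children d \subset level_set lev C (lev d).-1 by move=> dC /(hier d dC)[].
split=> [c cC y t B exe BC0 pres|c _]; last by rewrite /layer /= -ltnS.
have [r1_tau tau_r2] := midf_le (ler_wpM2r (ler0n R k) r12).
rewrite -mulrDl in r1_tau tau_r2.
have [sub2 sub1] := supp_level_sandwich r1_tau tau_r2
  (fired0 injIn repN_in BC0 pres)
  (fun l => fired_succ children_below rep_inj t l exe) (lev c).
have fired_c : c \in fired lev C repN y t (lev c) =
               y (t + lev c) (rep_neuron lev repN c) by rewrite !inE cC eqxx.
rewrite !mem_supported -fired_c; split=> [/(subsetP sub2)//|].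
by apply: contra => /(subsetP sub1).
Qed.
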